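(* Let $\mathcal{A}$ be a central hyperplane arrangement in $V=\mathbb{K}^3$. Then $\mathcal{A}$ is factored if and only if it is hereditarily factored, and $\mathcal{A}$ is inductively factored if and only if it is hereditarily inductively factored.
   Context: $\mathbb{K}$ is a field; a central arrangement is a finite set of linear hyperplanes; $\Phi_\ell$ the empty arrangement in an $\ell$-dimensional space. $L(\mathcal{A})$ is the set of intersections of subsets of $\mathcal{A}$ ($V$ included); $\mathcal{A}_X=\{H\in\mathcal{A}\mid X\subseteq H\}$, $\mathcal{A}^X=\{X\cap H\mid H\in\mathcal{A}\setminus\mathcal{A}_X\}$. A partition $\pi=(\pi_1,\ldots,\pi_s)$ of $\mathcal{A}$ is nice if it is independent (for all choices $H_i\in\pi_i$, $\operatorname{codim}(H_1\cap\cdots\cap H_s)=s$) and for each $X\in L(\mathcal{A})\setminus\{V\}$ some non-empty $\pi_i\cap\mathcal{A}_X$ is a singleton; $\mathcal{A}$ is factored if it has a nice partition (the empty partition is nice for an empty arrangement). For $H_0\in\pi_1$: $\mathcal{A}'=\mathcal{A}\setminus\{H_0\}$, $\mathcal{A}''=\mathcal{A}^{H_0}$, $\pi'$ the partition of $\mathcal{A}'$ by the non-empty $\pi_i\cap\mathcal{A}'$, $\mathrm{R}:\mathcal{A}\setminus\pi_1\to\mathcal{A}''$, $H\mapsto H\cap H_0$, $\pi''=(\mathrm{R}(\pi_2),\ldots,\mathrm{R}(\pi_s))$. The class of inductively factored pairs is the smallest class of pairs $(\mathcal{A},\pi)$ containing $(\Phi_\ell,\text{empty partition})$ for all $\ell$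 and containing $(\mathcal{A},\pi)$ whenever there is $H_0\in\pi_1$ with $\mathrm{R}$ bijective and $(\mathcal{A}',\pi')$, $(\mathcal{A}'',\pi'')$ in the class; $\mathcal{A}$ is inductively factored if some $(\mathcal{A},\pi)$ is in it. $\mathcal{A}$ is hereditarily (inductively) factored if $\mathcal{A}^X$ is (inductively) factored for every $X\in L(\mathcal{A})$. *)

From HB Require Import structures.
From mathcomp Require Import all_boot all_order all_algebra.
From mathcomp Require Import finmap.

Set Implicit Arguments.
Unset Strict Implicit.
Unset Printing Implicit Defensive.

Import GRing.Theory.
Local Open Scope fset_scope.
Local Open Scope ring_scope.

(* A central arrangement is modelled inside a fixed finite-dimensional K-vector
   space vT: its ambient space is a subspace W : {vspace vT}, and it is a finite
   set of linear hyperplanes of W (subspaces of W of codimension one in W). *)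

Section Arrangements.
Variables (K : fieldType) (vT : vectType K).

Definition subsp := {vspace vT}.

Definition is_hyperplane (W H : subsp) : bool :=
  (H <= W)%VS && ((\dim H).+1 == \dim W)%N.

Definition is_arrangement (W : subsp) (A : {fset subsp}) : Prop :=
  forall H, H \in A -> is_hyperplane W H.

Definition meet (W : subsp) (s : seq subsp) : subsp :=
  foldr (fun H X => (H :&: X)%VS) W s.

Definition in_L (W : subsp) (A : {fset subsp}) (X : subsp) : Prop :=
  exists S : {fset subsp}, S `<=` A /\ X = meet W S.

Definition localization (A : {fset subsp}) (X : subsp) : {fset subsp} :=
  [fset H in A | (X <= H)%VS].

(* A^X, an arrangement in the ambient space X *)
Definition restriction (A : {fset subsp}) (X : subsp) : {fset subsp} :=
  [fset (X :&: H)%VS | H in A & ~~ (X <= H)%VS].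

Definition is_partition (A : {fset subsp}) (pi : seq {fset subsp}) : Prop :=
  (forall i, (i < size pi)%N -> nth fset0 pi i != fset0) /\
  (forall i j, (i < size pi)%N -> (j < size pi)%N -> i <> j ->
      [disjoint nth fset0 pi i & nth fset0 pi j]) /\
  (forall H, H \in A <-> exists2 i, (i < size pi)%N & H \in nth fset0 pi i).

Definition codim (W X : subsp) : nat := (\dim W - \dim X)%N.

Definition independent (W : subsp) (pi : seq {fset subsp}) : Prop :=
  forall hs : seq subsp, size hs = size pi ->
    (forall i, (i < size pi)%N -> nth 0%VS hs i \in nth fset0 pi i) ->
    codim W (meet W hs) = size pi.

Definition nice (W : subsp) (A : {fset subsp}) (pi : seq {fset subsp}) : Prop :=
  is_partition A pi /\ independent W pi /\
  forall X, in_L W A X -> X <> W ->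
    exists2 i, (i < size pi)%N &
      #|` (nth fset0 pi i `&` localization A X)| = 1%N.

Definition factored (W : subsp) (A : {fset subsp}) : Prop :=
  exists pi, nice W A pi.

(* The restriction map R : A \ pi_i -> A^{H0}, H |-> H cap H0, is bijective *)
Definition R_bijective (A B : {fset subsp}) (H0 : subsp) : Prop :=
  (forall H1 H2, H1 \in A `\` B -> H2 \in A `\` B ->
      (H0 :&: H1)%VS = (H0 :&: H2)%VS -> H1 = H2) /\
  (forall Y, Y \in restriction A H0 ->
      exists2 H, H \in A `\` B & Y = (H0 :&: H)%VS).

Definition pi_del (pi : seq {fset subsp}) (H0 : subsp) : seq {fset subsp} :=
  [seq B <- [seq B `\ H0 | B <- pi] | B != fset0].

Definition pi_res (pi : seq {fset subsp}) (i : nat) (H0 : subsp)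
  : seq {fset subsp} :=
  [seq [fset (H0 :&: H)%VS | H in B] | B <- take i pi ++ drop i.+1 pi].

(* The distinguished block "pi_1" containing H0 may be any block of pi (the
   labelling of the blocks is immaterial). *)
Inductive ind_factored_pair : subsp -> {fset subsp} -> seq {fset subsp} -> Prop :=
  | IFP_empty (W : subsp) : ind_factored_pair W fset0 [::]
  | IFP_step (W : subsp) (A : {fset subsp}) (pi : seq {fset subsp})
      (i : nat) (H0 : subsp) :
      is_arrangement W A -> is_partition A pi ->
      (i < size pi)%N -> H0 \in nth fset0 pi i ->
      R_bijective A (nth fset0 pi i) H0 ->
      ind_factored_pair W (A `\ H0) (pi_del pi H0) ->
      ind_factored_pair H0 (restriction A H0) (pi_res pi i H0) ->
      ind_factored_pair W A pi.

Definition ind_factored (W : subsp) (A : {fset subsp}) : Prop :=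
  exists pi, ind_factored_pair W A pi.

Definition hered_factored (W : subsp) (A : {fset subsp}) : Prop :=
  forall X, in_L W A X -> factored X (restriction A X).

Definition hered_ind_factored (W : subsp) (A : {fset subsp}) : Prop :=
  forall X, in_L W A X -> ind_factored X (restriction A X).

End Arrangements.

From HB Require Import structures.
From mathcomp Require Import all_boot all_order all_algebra.
From mathcomp Require Import finmap.
From mathcomp Require Import zify.
Set Implicit Arguments.
Unset Strict Implicit.
Local Open Scope fset_scope.

(* In V = K^3 every X in L(A) other than V has dimension at most 2, so A^X is
   an arrangement of rank at most 2: its hyperplanes pairwise meet in 0. Such
   an arrangement is always inductively factored, with the nice partition
   ({H1}, A \ {H1}): deleting a hyperplane H0 of the second block keeps this
   shape, and restricting to H0 leaves the single point {0} on a line. Since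
   A^V = A, the arrangement A itself is thus the only restriction that can
   fail to be (inductively) factored. *)

Lemma fsetD1C (T : choiceType) (B : {fset T}) x y : B `\ x `\ y = B `\ y `\ x.
Proof. by apply/fsetP => z; rewrite !in_fsetD1 andbCA. Qed.

Lemma fset1D1 (T : choiceType) (x y : T) : x != y -> [fset x] `\ y = [fset x].
Proof.
move=> ne; apply/fsetP => z; rewrite in_fsetD1 in_fset1.
by case: (z =P x) => [->|]; rewrite ?ne ?andbF.
Qed.

Lemma cardfsI1 (T : choiceType) (C D : {fset T}) a : a \in C -> a \in D ->
  (forall x, x \in C -> x \in D -> x = a) -> #|` C `&` D| = 1%N.
Proof.
move=> aC aD uniq_a; suff -> : C `&` D = [fset a] by exact: cardfs1.
apply/fsetP => x; rewrite in_fsetI in_fset1.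
by apply/andP/eqP => [[xC xD]|->]; [exact: uniq_a | split].
Qed.

Section Arrangements.
Variables (K : fieldType) (vT : vectType K).
Implicit Types (W X Y H : {vspace vT}) (B C : {fset {vspace vT}}).

Lemma hyperplaneP W H :
  reflect ((H <= W)%VS /\ (\dim H).+1 = \dim W) (is_hyperplane W H).
Proof. by apply: (iffP andP) => -[? /eqP]. Qed.

Lemma fset1_neq0 H : [fset H] != (fset0 : {fset {vspace vT}}).
Proof. by apply/negP => /eqP e; move: (fset11 H); rewrite e inE. Qed.

Lemma partition0 : is_partition (fset0 : {fset {vspace vT}}) [::].
Proof. by split=> //; split=> // H; split; [rewrite inE | case]. Qed.

Lemma partition1 B C : C != fset0 -> B =i C -> is_partition B [:: C].
Proof.
move=> nC eB; split; first by case.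
split; first by case=> [|i] [|j].
move=> H; rewrite eB; split; first by exists 0%N.
by case=> [[|i]].
Qed.

Lemma partition2 B C1 C2 : C1 != fset0 -> C2 != fset0 -> [disjoint C1 & C2] ->
  (forall H, H \in B = (H \in C1) || (H \in C2)) -> is_partition B [:: C1; C2].
Proof.
move=> n1 n2 d eB; split; first by case=> [|[|i]].
split; first by case=> [|[|i]] [|[|j]] //= _ _ _; rewrite fdisjoint_sym.
move=> H; rewrite eB; split.
  by case/orP=> ?; [exists 0%N | exists 1%N].
by case=> [[|[|i]]] //= _ ->; rewrite ?orbT.
Qed.

Lemma localizationP B X H :
  reflect (H \in B /\ (X <= H)%VS) (H \in localization B X).
Proof. by rewrite inE; apply: andP. Qed.

Lemma meet_sub W (s : seq {vspace vT}) H : H \in s -> (meet W s <= H)%VS.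
Proof.
elim: s => // a s IH; rewrite inE => /orP [/eqP ->|Hs] /=; first exact: capvSl.
exact: subv_trans (capvSr _ _) (IH Hs).
Qed.

Lemma in_L_sub_hyperplane W B X : in_L W B X -> X <> W -> exists2 H, H \in B & (X <= H)%VS.
Proof.
case=> S [SB ->]; case E: (S : seq _) => [|H s]; first by move=> /(_ erefl).
move=> _; exists H; last by apply: meet_sub; rewrite mem_head.
by apply: (fsubsetP SB); have: H \in (S : seq _) by rewrite E mem_head.
Qed.

Lemma restriction_arrangement W B X : is_arrangement W B -> (X <= W)%VS ->
  is_arrangement X (restriction B X).
Proof.
move=> arrB XW Y /imfsetP [H]; rewrite inE /= => /andP [HB XnH] ->.
have /hyperplaneP [HW dH] := arrB _ HB.
have dXH : \dim (X + H) = \dim W.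
  apply/eqP; rewrite eqn_leq dimvS ?subv_add ?XW //= -dH ltnNge.
  apply: contra XnH => le; have /eqP -> : (H == X + H)%VS by rewrite eqEdim addvSr.
  exact: addvSl.
apply/hyperplaneP; split; first exact: capvSl.
by have := dimv_sum_cap X H; rewrite dXH -dH; lia.
Qed.

Lemma restriction_fullv B : is_arrangement fullv B -> restriction B fullv = B.
Proof.
move=> arrB; apply/fsetP => H; apply/imfsetP/idP.
  by case=> H'; rewrite inE /= => /andP [H'B _] ->; rewrite capfv.
move=> HB; exists H; last by rewrite capfv.
rewrite inE /= HB /=; apply/negP => /dimvS.
by have /hyperplaneP [_ <-] := arrB _ HB; rewrite ltnn.
Qed.

Section Arrangement.
Variables (X : {vspace vT}) (B : {fset {vspace vT}}).
Hypothesis arrB : is_arrangement X B.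

Lemma arrangement_sub_eq H H' : H \in B -> H' \in B -> (H <= H')%VS -> H = H'.
Proof.
move=> /arrB /hyperplaneP [_ dH] /arrB /hyperplaneP [_ dH'] le.
by apply/eqP; rewrite eqEdim le; apply: eq_leq; apply: succn_inj; rewrite dH dH'.
Qed.

Lemma restriction_single H1 : B `\ H1 = fset0 -> restriction B H1 = fset0.
Proof.
move=> eB; apply/fsetP => Z; rewrite inE; apply/negbTE/imfsetP.
case=> H /= /andP [HB H1nH] _; have [eH|neH] := eqVneq H H1.
  by move: H1nH; rewrite eH subvv.
have : H \in B `\ H1 by rewrite !inE neH HB.
by rewrite eB inE.
Qed.

Lemma ind_factored_pair_single H1 : H1 \in B -> B `\ H1 = fset0 ->
  ind_factored_pair X B [:: [fset H1]].
Proof.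
move=> H1B eB; apply: (@IFP_step _ _ X B _ 0%N H1) => //.
- apply: partition1; first exact: fset1_neq0.
  move=> H; apply/idP/fset1P => [HB|-> //]; apply/eqP; apply: contraT => neH.
  have : H \in B `\ H1 by rewrite !inE neH HB.
  by rewrite eB inE.
- exact: fset11.
- split; first by move=> H2 H3; rewrite /= eB inE.
  by move=> Z; rewrite (restriction_single eB) inE.
- by rewrite eB /pi_del /= fsetDv eqxx; exact: IFP_empty.
- by rewrite (restriction_single eB); exact: IFP_empty.
Qed.

Hypothesis dimX : (\dim X <= 2)%N.

Lemma arrangement_nonzero_sub_eq H Y : H \in B -> (Y <= H)%VS -> Y != 0%VS -> Y = H.
Proof.
move=> /arrB /hyperplaneP [_ dH] YH; rewrite -dimv_eq0 => nY.
by apply/eqP; rewrite eqEdim YH; move: dimX; rewrite -dH; lia.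
Qed.

Lemma arrangement_capv_eq0 H H' : H \in B -> H' \in B -> H != H' -> (H :&: H' = 0)%VS.
Proof.
move=> HB H'B; apply: contraNeq => nz.
have e := arrangement_nonzero_sub_eq HB (capvSl H H') nz.
by apply/eqP; apply: arrangement_sub_eq HB H'B _; rewrite -e capvSr.
Qed.

Lemma arrangement_dimv_eq2 H H' : H \in B -> H' \in B -> H != H' -> \dim X = 2%N.
Proof.
move=> HB H'B ne; have /hyperplaneP [_ dH] := arrB HB.
have /hyperplaneP [_ dH'] := arrB H'B.
apply/eqP; rewrite eqn_leq dimX /= ltnNge; apply: contra ne => le.
have /eqP -> : H == 0%VS by rewrite -dimv_eq0; move: le; rewrite -dH; lia.
by have /eqP -> : H' == 0%VS by rewrite -dimv_eq0; move: le; rewrite -dH'; lia.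
Qed.

Definition split_partition H1 :=
  if B `\ H1 == fset0 then [:: [fset H1]] else [:: [fset H1]; B `\ H1].

Lemma split_partition_partition H1 : H1 \in B -> is_partition B (split_partition H1).
Proof.
move=> H1B; rewrite /split_partition; case: ifP => E.
  apply: partition1; first exact: fset1_neq0.
  move: E; rewrite fsetD_eq0 => /fsubsetP E H.
  by apply/idP/idP => [/E|/fset1P ->].
apply: partition2; [exact: fset1_neq0 | by rewrite E | |].
  by apply/fdisjointP => x /fset1P ->; rewrite in_fsetD1 eqxx.
by move=> H; rewrite in_fsetD1 in_fset1; case: (H =P H1) => [->|].
Qed.

Lemma split_partition_independent H1 : H1 \in B -> independent X (split_partition H1).
Proof.
move=> H1B hs; rewrite /split_partition; case: ifP => E.
  case: hs => [|a [|]] // _ /(_ 0%N isT) /fset1P /= ->.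
  have /hyperplaneP [le d] := arrB H1B.
  by rewrite /codim /= (capv_idPl le) -d; lia.
case: hs => [|a [|b [|]]] // _ hs.
have /fset1P /= -> := hs 0%N isT.
have /fsetD1P [ne bB] := hs 1%N isT.
have /hyperplaneP [le _] := arrB bB.
rewrite /codim /= (capv_idPl le) capvC (arrangement_capv_eq0 bB H1B ne) dimv0 subn0.
exact: arrangement_dimv_eq2 bB H1B ne.
Qed.

Lemma split_partition_nice H1 : H1 \in B -> forall Y, in_L X B Y -> Y <> X ->
  exists2 i, (i < size (split_partition H1))%N &
    #|` (nth fset0 (split_partition H1) i `&` localization B Y)| = 1%N.
Proof.
move=> H1B Y /in_L_sub_hyperplane YL /YL [H HB YH].
have [YH1|YnH1] := boolP (Y <= H1)%VS.
  exists 0%N; first by rewrite /split_partition; case: ifP.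
  have -> : nth fset0 (split_partition H1) 0 = [fset H1].
    by rewrite /split_partition; case: ifP.
  apply: cardfsI1 (fset11 H1) _ _; first exact/localizationP.
  by move=> x /fset1P.
have Y0 : Y != 0%VS by apply: contraNneq YnH1 => ->; exact: sub0v.
have eY := arrangement_nonzero_sub_eq HB YH Y0; subst Y.
have ne : H != H1 by apply: contraNneq YnH1 => ->; exact: subvv.
have HBH1 : H \in B `\ H1 by apply/fsetD1P.
have E : (B `\ H1 == fset0) = false by apply/negbTE/fset0Pn; exists H.
exists 1%N; first by rewrite /split_partition E.
rewrite /split_partition E; apply: (cardfsI1 HBH1); first exact/localizationP.
move=> x /fsetD1P [_ xB] /localizationP [_ Hx].
by apply: esym; apply: arrangement_sub_eq HB xB Hx.
Qed.

Lemma factored_dim_le2 : factored X B.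
Proof.
have [E|[H1 H1B]] := fset_0Vmem B.
  exists [::]; split; first by rewrite E; exact: partition0.
  split; first by case=> // _ _; rewrite /codim subnn.
  by move=> Y /in_L_sub_hyperplane YL /YL [H]; rewrite E inE.
exists (split_partition H1); split; first exact: split_partition_partition.
by split; [exact: split_partition_independent | exact: split_partition_nice].
Qed.

Lemma restriction_dim_le2 H0 H1 : H0 \in B -> H1 \in B -> H0 != H1 ->
  restriction B H0 = [fset 0%VS].
Proof.
move=> H0B H1B ne01; apply/fsetP => Z.
apply/imfsetP/fset1P => [[H /= /andP [HB H0nH] ->] | ->].
  apply: arrangement_capv_eq0 H0B HB _.
  by apply: contraNneq H0nH => <-; exact: subvv.
exists H1; last by rewrite (arrangement_capv_eq0 H0B H1B ne01).
rewrite inE /= H1B /=; apply: contraNN ne01 => le.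
by rewrite (arrangement_sub_eq H0B H1B le).
Qed.

End Arrangement.

Lemma pi_del_cons C pi H0 : pi_del (C :: pi) H0 =
  if C `\ H0 != fset0 then C `\ H0 :: pi_del pi H0 else pi_del pi H0.
Proof. by []. Qed.

Lemma ind_factored_pair_point Y : \dim Y = 1%N ->
  ind_factored_pair Y [fset 0%VS] [:: [fset 0%VS]].
Proof.
move=> dY; apply: ind_factored_pair_single; rewrite ?fset11 ?fsetDv //.
by move=> H /fset1P ->; apply/hyperplaneP; rewrite sub0v dimv0 dY.
Qed.

Lemma ind_factored_pair_split_partition n X B H1 : is_arrangement X B ->
  (\dim X <= 2)%N -> #|` B| = n -> H1 \in B ->
  ind_factored_pair X B (split_partition B H1).
Proof.
elim: n X B H1 => [|n IH] X B H1 arrB dX cB H1B.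
  by move: cB; rewrite (cardfsD1 H1) H1B.
have [E|E] := eqVneq (B `\ H1) fset0.
  by rewrite /split_partition E eqxx; exact: ind_factored_pair_single.
have partB := split_partition_partition H1B.
rewrite /split_partition (negbTE E) in partB *.
have [H0 /fsetD1P [ne01 H0B]] := fset0Pn _ E.
have ne10 : H1 != H0 by rewrite eq_sym.
have cap01 := arrangement_capv_eq0 arrB dX H0B H1B ne01.
have memD x : x \in B `\` (B `\ H1) -> x = H1.
  by rewrite !inE; case: (x =P H1) => //= _; case: (x \in B).
apply: (@IFP_step _ _ X B _ 1%N H0) => //.
- by apply/fsetD1P.
- split; first by move=> a b /memD -> /memD ->.
  rewrite (restriction_dim_le2 arrB dX H0B H1B ne01) => Z /fset1P ->.
  by exists H1; rewrite ?cap01 // !inE eqxx H1B.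
- have -> : pi_del [:: [fset H1]; B `\ H1] H0 = split_partition (B `\ H0) H1.
    rewrite !pi_del_cons (fset1D1 ne10) fset1_neq0 fsetD1C /split_partition.
    by case: ((B `\ H0) `\ H1 =P fset0).
  apply: IH.
  + by move=> H /fsetD1P [_ /arrB].
  + exact: dX.
  + by move: cB; rewrite (cardfsD1 H0) H0B => -[].
  + by apply/fsetD1P.
- have eR : [fset (H0 :&: H)%VS | H in [fset H1]] = [fset 0%VS].
    by apply/fsetP => Z; apply/imfsetP/fset1P => [[H /fset1P -> ->] | ->];
      [| exists H1; rewrite ?fset11].
  rewrite /pi_res /= eR (restriction_dim_le2 arrB dX H0B H1B ne01).
  apply: ind_factored_pair_point.
  have /hyperplaneP [_ dH0] := arrB _ H0B.
  by move: dH0; rewrite (arrangement_dimv_eq2 arrB dX H0B H1B ne01) => -[].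
Qed.

Lemma ind_factored_dim_le2 X B : is_arrangement X B -> (\dim X <= 2)%N ->
  ind_factored X B.
Proof.
move=> arrB dX; have [->|[H1 H1B]] := fset_0Vmem B.
  by exists [::]; exact: IFP_empty.
by exists (split_partition B H1); exact: ind_factored_pair_split_partition.
Qed.

Lemma hereditary_iff_dim_le3 (P : {vspace vT} -> {fset {vspace vT}} -> Prop) B :
  (\dim (fullv : {vspace vT}) <= 3)%N ->
  (forall X C, is_arrangement X C -> (\dim X <= 2)%N -> P X C) ->
  is_arrangement fullv B ->
  P fullv B <-> (forall X, in_L fullv B X -> P X (restriction B X)).
Proof.
move=> dV P_le2 arrB; rewrite -{1}(restriction_fullv arrB); split; last first.
  by apply; exists fset0; split; [exact: fsub0set|].
move=> PV X _; have [->//|neX] := eqVneq X fullv.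
apply: P_le2; first exact: (restriction_arrangement arrB (subvf X)).
have : (\dim X < \dim (fullv : {vspace vT}))%N.
  by rewrite ltnNge; apply: contra neX => le; rewrite eqEdim subvf le.
by move: dV; lia.
Qed.

End Arrangements.

Theorem lemma3p26 (K : fieldType) (A : {fset {vspace 'rV[K]_3}}) :
  is_arrangement fullv A ->
  (factored fullv A <-> hered_factored fullv A) /\
  (ind_factored fullv A <-> hered_ind_factored fullv A).
Proof.
move=> arrA; have dV : (\dim (fullv : {vspace 'rV[K]_3}) <= 3)%N.
  by rewrite dimvf dim_matrix.
split; apply: hereditary_iff_dim_le3 => //.
- exact: factored_dim_le2.
- exact: ind_factored_dim_le2.
Qed.
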